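(* Assume (A1)–(A2) and $N\geq 1$ (with $N\ge \max\{1,\|f\|_\infty/2\}$ as in the setting of the scheme), and let $v_n^h$ and $v^h$ be as in the context. Then there exists a universal constant $C>0$ such that for all $n\geq 0$ and $R\geq 1$, \[ \sup_{t \in [0,T]}\int_{B_R}\left|\alpha(t,x,\nabla^h v^h_n(t,x))- \alpha(t,x,\nabla^h v^h(t,x))\right|^2\,dx\leq C2^{-n}\exp\left[C\exp(CT)/h\right]R^d, \] where $B_R$ is the ball of radius $R$ centered at the origin.
   Context: Let $d,m\ge1$, $T\ge 1$, and let $A\subset\mathbb{R}^m$ be compact. Let $c:[0,T]\times\mathbb{R}^d\times A\to\mathbb{R}$, $f:[0,T]\times\mathbb{R}^d\times A\to\mathbb{R}^d$, $q:\mathbb{R}^d\to\mathbb{R}$. For $(t,x,p)$ let $\alpha(t,x,p)=\operatorname{argmin}_{a\in A}[c(t,x,a)+p\cdot f(t,x,a)]$, assumed to be the unique minimizer, and $H(t,x,p)=\min_{a\in A}[c(t,x,a)+p\cdot f(t,x,a)]$. Assumptions: (A1) $c,f,q$ are uniformly bounded and Lipschitz continuous in all their variables; (A2) $\alpha(\cdot,\cdot,\cdot)$ and a given continuous initial policy $\alpha_0:\mathbb{R}\times\mathbb{R}^d\to A$ are uniformly Lipschitz continuous in all their variables. $\|f\|_\infty=\sup|f|$. For $\varphi:\mathbb{R}^d\to\mathbb{R}$, $h\neq0$ and standard basis vectors $e_i$: $\nabla^h\varphi(x)=\big(\frac{\varphi(x+he_i)-\varphi(x-he_i)}{2h}\big)_{i=1}^d$,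 $\Delta^h\varphi(x)=\sum_{i=1}^d\frac{\varphi(x+he_i)-2\varphi(x)+\varphi(x-he_i)}{h^2}$; for functions of $(t,x)$ these act in $x$. Semi-discrete policy iteration: fix $h\in(0,1)$ and $N\ge\max\{1,\|f\|_\infty/2\}$; for $n=0,1,\dots$, $v_n^h$ solves $\partial_t v_n^h+c(t,x,\alpha_n(t,x))+\nabla^h v_n^h\cdot f(t,x,\alpha_n(t,x))=-Nh\Delta^h v_n^h$ in $(0,T)\times\mathbb{R}^d$, $v_n^h(T,x)=q(x)$, and then $\alpha_{n+1}(t,x)=\alpha(t,x,\nabla^h v_n^h(t,x))$. The function $v^h$ solves $\partial_t v^h+H(t,x,\nabla^h v^h)=-Nh\Delta^h v^h$ in $(0,T)\times\mathbb{R}^d$, $v^h(T,x)=q(x)$. A constant is universal if it depends only on $d$, $N$ and the constants in (A1)–(A2). *)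

From HB Require Import structures.
From mathcomp Require Import all_boot all_order all_algebra.
From mathcomp Require Import all_classical all_reals all_analysis.
Set Implicit Arguments. Unset Strict Implicit. Unset Printing Implicit Defensive.
Import Order.TTheory GRing.Theory Num.Theory.
Import numFieldNormedType.Exports.
Local Open Scope classical_set_scope.
Local Open Scope ring_scope.

Section Defs.
Variable R : realType.

Definition enorm (k : nat) (v : 'rV[R]_k) : R := Num.sqrt (\sum_i (v 0 i) ^+ 2).
Definition dotp (k : nat) (u v : 'rV[R]_k) : R := \sum_i u 0 i * v 0 i.

Definition evec (d : nat) (i : 'I_d) : 'rV[R]_d := delta_mx 0 i.

Definition gradh (d : nat) (h : R) (phi : 'rV[R]_d -> R) (x : 'rV[R]_d) : 'rV[R]_d :=
  \row_i ((phi (x + h *: evec i) - phi (x - h *: evec i)) / (2 * h)).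
Definition laph (d : nat) (h : R) (phi : 'rV[R]_d -> R) (x : 'rV[R]_d) : R :=
  \sum_i ((phi (x + h *: evec i) - 2 * phi x + phi (x - h *: evec i)) / (h ^+ 2)).

Definition fcons (k : nat) (a : R) (y : 'I_k -> R) : 'I_k.+1 -> R :=
  fun i => match unlift ord0 i with None => a | Some j => y j end.

(* Lebesgue integral over R^k of a nonnegative extended function, computed as
   an iterated one-dimensional Lebesgue integral (Tonelli). *)
Fixpoint iint (k : nat) : (('I_k -> R) -> \bar R) -> \bar R :=
  match k return (('I_k -> R) -> \bar R) -> \bar R with
  | 0 => fun g => g (fun _ => 0)
  | k'.+1 => fun g =>
      (\int[@lebesgue_measure R]_(a in [set: R]) iint (fun y => g (fcons a y)))%E
  end.
Definition integral_Rd (k : nat) (g : 'rV[R]_k -> \bar R) : \bar R :=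
  iint (fun y => g (\row_i y i)).

(* Hamiltonian H(t,x,p) = min_a [c + p.f] = value at the (unique) minimizer alpha *)
Definition Ham (d m : nat) (c : R -> 'rV[R]_d -> 'rV[R]_m -> R)
  (f : R -> 'rV[R]_d -> 'rV[R]_m -> 'rV[R]_d)
  (alpha : R -> 'rV[R]_d -> 'rV[R]_d -> 'rV[R]_m) (t : R) (x p : 'rV[R]_d) : R :=
  c t x (alpha t x p) + dotp p (f t x (alpha t x p)).

Definition policy (d m : nat) (alpha0 : R -> 'rV[R]_d -> 'rV[R]_m)
  (alpha : R -> 'rV[R]_d -> 'rV[R]_d -> 'rV[R]_m) (h : R)
  (v : nat -> R -> 'rV[R]_d -> R) (n : nat) : R -> 'rV[R]_d -> 'rV[R]_m :=
  match n with
  | 0 => alpha0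
  | n'.+1 => fun t x => alpha t x (gradh h (v n' t) x)
  end.

Definition solves (d : nat) (T N h : R) (q : 'rV[R]_d -> R)
  (F : R -> 'rV[R]_d -> ('rV[R]_d -> R) -> R) (w : R -> 'rV[R]_d -> R) : Prop :=
  (exists M : R, forall t x, 0 <= t <= T -> `|w t x| <= M) /\
  (forall x, {within `[0, T], continuous (fun s => w s x)}) /\
  (forall t x, 0 < t < T ->
     derivable (fun s => w s x) t 1 /\
     'D_1 (fun s => w s x) t + F t x (w t) = - (N * h) * laph h (w t) x) /\
  (forall x, w T x = q x).

End Defs.

From mathcomp Require Import all_boot all_order all_algebra.
From mathcomp Require Import all_classical all_reals all_analysis.
From mathcomp Require Import ring lra.
Import Order.TTheory GRing.Theory Num.Theory.
Import numFieldNormedType.Exports.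
Local Open Scope classical_set_scope.
Local Open Scope ring_scope.

(* Let u = v_{n+1}^h - v^h. As alpha_{n+1} minimizes c + p.f at p = grad^h v_n^h,
   u solves d_t u + grad^h u . f(alpha_{n+1}) + N h Lap^h u = - g with
   0 <= g <= (4dN/h) sup |v_n^h - v^h|. Since |f| <= 2N the spatial operator is
   monotone: L phi(x) <= (2dN/h) (sup phi - phi(x)). Comparing u with the barrier
   be exp (ga (T - t)), ga = 8dN/h, therefore halves the error bound at each
   iteration; the underlying maximum principle is proved by backward time
   stepping, since suprema over R^d need not be attained. The Lipschitz
   continuity of alpha and |grad^h phi| <= sup |phi| / h give a pointwise bound
   on the policy gap, and the ball lies in a cube of volume (2R)^d. *)

Section BackwardMaximumPrinciple.
Context {R : realType} {X : Type}.
Variables (T lam D : R) (z : R -> X -> R).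
Hypotheses (lam_ge0 : 0 <= lam) (D_ge0 : 0 <= D).
Hypothesis z_cont : forall x, {within `[0, T], continuous (z^~ x)}.
Hypothesis z_derivable : forall r x, 0 < r < T -> derivable (z^~ x) r 1.
Hypothesis z_derive_bounded : forall r x, 0 < r < T -> `|'D_1 (z^~ x) r| <= D.
Hypothesis z_derive_ge : forall r x m, 0 < r < T -> (forall y, z r y <= m) ->
  - lam * (m - z r x) <= 'D_1 (z^~ x) r.
Hypothesis z_T_le0 : forall x, z T x <= 0.

Lemma time_mvt x [a b] : 0 <= a -> a < b -> b <= T ->
  exists2 r, a < r < b & z b x - z a x = 'D_1 (z^~ x) r * (b - a).
Proof.
move=> a_ge0 ab bT.
have z'_is_derive r : r \in `]a, b[ -> is_derive r 1 (z^~ x) ('D_1 (z^~ x) r).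
  rewrite in_itv /= => /andP[ar rb]; apply/derivableP/z_derivable.
  by rewrite (le_lt_trans a_ge0 ar) (lt_le_trans rb bT).
have z_cont_ab : {within `[a, b], continuous (z^~ x)}.
  apply: (continuous_subspaceW _ (z_cont x)) => s /=; rewrite !in_itv /= => /andP[a_s sb].
  by rewrite (le_trans a_ge0 a_s) (le_trans sb bT).
have [r] := MVT ab z'_is_derive z_cont_ab.
by rewrite in_itv /= => r_in ->; exists r.
Qed.

Lemma time_lipschitz x [a b] : 0 <= a -> a <= b -> b <= T ->
  `|z b x - z a x| <= D * (b - a).
Proof.
move=> a_ge0; rewrite le_eqVlt => /predU1P[<- _|ab bT].
  by rewrite !subrr mulr0 normr0.
have [r /andP[ar rb] ->] := time_mvt x a_ge0 ab bT.
have ba_ge0 : 0 <= b - a by rewrite subr_ge0 ltW.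
rewrite normrM (ger0_norm ba_ge0); apply: ler_wpM2r => //.
by apply: z_derive_bounded; rewrite (le_lt_trans a_ge0 ar) (lt_le_trans rb bT).
Qed.

Lemma backward_step_le t del m : 0 <= del -> 0 <= t - del -> t <= T ->
  lam * del <= 1 -> (forall y, z t y <= m) ->
  forall x, z (t - del) x <= m + 2 * lam * D * del ^+ 2.
Proof.
rewrite le_eqVlt => /predU1P[<- _ _ _ z_le x|del_gt0 a_ge0 tT lam_del z_le x].
  by rewrite subr0 expr0n /= mulr0 addr0.
have [|r /andP[ar rt]] := time_mvt x a_ge0 _ tT; first by rewrite gtrBl.
rewrite (_ : t - (t - del) = del) => [z_incr|]; last by rewrite opprB addrC subrK.
have r_ge0 : 0 <= r by rewrite (le_trans a_ge0) ?ltW.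
have D_tr : D * (t - r) <= D * del by rewrite ler_wpM2l // lerBlDr -lerBlDl ltW.
have z_r_le y : z r y <= m + D * del.
  by have /ler_normlP[] := time_lipschitz y r_ge0 (ltW rt) tT; have := z_le y; lra.
have z_r_ge : z t x - D * del <= z r x.
  by have /ler_normlP[] := time_lipschitz x r_ge0 (ltW rt) tT; lra.
have r_in : 0 < r < T by rewrite (le_lt_trans a_ge0 ar) (lt_le_trans rt tT).
have := z_derive_ge r x _ r_in z_r_le.
move: ('D_1 (z^~ x) r) z_incr => z' z_incr z'_ge.
have z_t_le := z_le x.
have lam_del_ge0 : 0 <= lam * del by rewrite mulr_ge0 // ltW.
have : - z' * del <= lam * del * (m + 2 * D * del - z t x).
  apply: le_trans (_ : lam * (m + D * del - z r x) * del <= _).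
    by rewrite ler_wpM2r ?(ltW del_gt0) //; lra.
  by rewrite mulrAC ler_wpM2l //; lra.
have : lam * del * (m - z t x) <= m - z t x.
  by rewrite ler_piMl ?subr_ge0.
rewrite expr2; lra.
Qed.

Lemma backward_steps_le n t x : 0 <= t <= T -> lam * (T - t) <= n.+1%:R ->
  z t x <= 2 * lam * D * (T - t) ^+ 2 / n.+1%:R.
Proof.
move=> /andP[t_ge0 tT] lam_n.
set del := (T - t) / n.+1%:R.
have del_ge0 : 0 <= del by rewrite divr_ge0 ?subr_ge0.
have lam_del : lam * del <= 1 by rewrite mulrA ler_pdivrMr // mul1r.
have z_grid k : (k <= n.+1)%N ->
    forall y, z (T - k%:R * del) y <= k%:R * (2 * lam * D * del ^+ 2).
  elim: k => [_ y|k IH k_le y]; first by rewrite !mul0r subr0 z_T_le0.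
  have k_del : k.+1%:R * del <= T - t.
    rewrite /del mulrA ler_pdivrMr // mulrC.
    by apply: ler_wpM2l; rewrite ?subr_ge0 ?ler_nat.
  rewrite -natr1 mulrDl mul1r opprD addrA mulrDl mul1r.
  apply: backward_step_le => //; last exact: IH (ltnW k_le).
  - by move: k_del; rewrite -natr1; lra.
  - by rewrite lerBlDr lerDl mulr_ge0.
have := z_grid n.+1 (leqnn _) x.
rewrite /del mulrCA divff ?pnatr_eq0 // mulr1 opprB addrC subrK.
suff -> : n.+1%:R * (2 * lam * D * ((T - t) / n.+1%:R) ^+ 2) =
  2 * lam * D * (T - t) ^+ 2 / n.+1%:R by [].
by field.
Qed.

Lemma backward_max_principle t x : 0 <= t <= T -> z t x <= 0.
Proof.
move=> t_in; rewrite leNgt; apply/negP => z_gt0.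
set B := 2 * lam * D * (T - t) ^+ 2.
have B_ge0 : 0 <= B by rewrite !mulr_ge0 ?sqr_ge0 //; lra.
have lamT_ge0 : 0 <= lam * (T - t) by case/andP: t_in => _ tT; rewrite mulr_ge0 ?subr_ge0.
pose n := Num.bound (lam * (T - t) + B / z t x).
have n_gt : lam * (T - t) + B / z t x < n.+1%:R.
  apply: lt_le_trans (archi_boundP _) _; first by rewrite addr_ge0 // divr_ge0 // ltW.
  by rewrite ler_nat.
have lam_n : lam * (T - t) <= n.+1%:R.
  by apply: ltW (le_lt_trans _ n_gt); rewrite lerDl divr_ge0 // ltW.
have := backward_steps_le n t x t_in lam_n; rewrite -/B => z_le.
suff : B / n.+1%:R < z t x by rewrite ltNge z_le.
rewrite ltr_pdivrMr // mulrC -ltr_pdivrMr //.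
by apply: le_lt_trans n_gt; rewrite lerDr.
Qed.

End BackwardMaximumPrinciple.

Section DiscreteOperator.
Context {R : realType} {d : nat}.
Implicit Types (phi psi : 'rV[R]_d -> R) (b u x : 'rV[R]_d).

Definition Lh (h N : R) phi b x := dotp (gradh h phi x) b + N * h * laph h phi x.

Lemma Lh_sum h N phi b x : Lh h N phi b x =
  \sum_i ((phi (x + h *: evec R i) - phi (x - h *: evec R i)) / (2 * h) * b 0 i +
          N * h * ((phi (x + h *: evec R i) - 2 * phi x + phi (x - h *: evec R i)) / h ^+ 2)).
Proof.
rewrite /Lh /dotp /laph mulr_sumr -big_split /=.
by apply: eq_bigr => i _; rewrite /gradh mxE.
Qed.

(* For [|b| <= 2N] the stencil has nonnegative weights [2N +- b] on the two
   neighbours: this is the monotonicity of the scheme. *)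
Lemma centered_stencil_le (h N m p a c bb : R) : 0 < h -> `|bb| <= 2 * N ->
  a <= m -> c <= m ->
  (a - c) / (2 * h) * bb + N * h * ((a - 2 * p + c) / h ^+ 2) <= 2 * N / h * (m - p).
Proof.
move=> h_gt0 /ler_normlP[bb_ge bb_le] am cm.
have -> : (a - c) / (2 * h) * bb + N * h * ((a - 2 * p + c) / h ^+ 2)
   = ((a - p) * (2 * N + bb) + (c - p) * (2 * N - bb)) / (2 * h).
  by field; rewrite gt_eqF.
have -> : 2 * N / h * (m - p) = (4 * N * (m - p)) / (2 * h) by field; rewrite gt_eqF.
rewrite ler_pM2r ?invr_gt0 ?mulr_gt0 //.
have : 0 <= (m - a) * (2 * N + bb) by apply: mulr_ge0; lra.
have : 0 <= (m - c) * (2 * N - bb) by apply: mulr_ge0; lra.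
lra.
Qed.

Lemma Lh_le [h N m phi b] x : 0 < h -> (forall i, `|b 0 i| <= 2 * N) ->
  (forall y, phi y <= m) -> Lh h N phi b x <= d%:R * (2 * N / h) * (m - phi x).
Proof.
move=> h_gt0 b_le phi_le; rewrite Lh_sum.
have -> : d%:R * (2 * N / h) * (m - phi x) = \sum_(i < d) (2 * N / h * (m - phi x)).
  by rewrite sumr_const card_ord -mulr_natl; ring.
by apply: ler_sum => i _; apply: centered_stencil_le.
Qed.

Lemma LhN h N phi b x : Lh h N (fun y => - phi y) b x = - Lh h N phi b x.
Proof. by rewrite !Lh_sum -sumrN; apply: eq_bigr => i _; ring. Qed.

Lemma LhB h N phi psi b x :
  Lh h N (fun y => phi y - psi y) b x = Lh h N phi b x - Lh h N psi b x.
Proof. by rewrite !Lh_sum -sumrB; apply: eq_bigr => i _; ring. Qed.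

Lemma Lh_norm_le [h N M phi b] x : 0 < h -> 0 <= N ->
  (forall i, `|b 0 i| <= 2 * N) -> (forall y, `|phi y| <= M) ->
  `|Lh h N phi b x| <= 2 * (d%:R * (2 * N / h)) * M.
Proof.
move=> h_gt0 N_ge0 b_le phi_le.
have lam_ge0 : 0 <= d%:R * (2 * N / h).
  by rewrite mulr_ge0 // divr_ge0 ?(ltW h_gt0) //; lra.
have phi_bounds y : - M <= phi y <= M by rewrite -ler_norml.
have phi_up y : phi y <= M by case/andP: (phi_bounds y).
have phi_neg_up y : - phi y <= M by rewrite lerNl; case/andP: (phi_bounds y).
have up := Lh_le x h_gt0 b_le phi_up.
have := Lh_le x h_gt0 b_le phi_neg_up; rewrite LhN => low.
have /andP[phi_ge phi_le'] := phi_bounds x.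
have up' : d%:R * (2 * N / h) * (M - phi x) <= d%:R * (2 * N / h) * (2 * M).
  by apply: ler_wpM2l => //; lra.
have low' : d%:R * (2 * N / h) * (M - - phi x) <= d%:R * (2 * N / h) * (2 * M).
  by apply: ler_wpM2l => //; lra.
by rewrite ler_norml; apply/andP; split; lra.
Qed.

Lemma gradhB h phi psi x :
  gradh h (fun y => phi y - psi y) x = gradh h phi x - gradh h psi x.
Proof. by apply/rowP => i; rewrite !mxE; ring. Qed.

Lemma gradh_norm_le [h M phi] x i : 0 < h -> (forall y, `|phi y| <= M) ->
  `|gradh h phi x 0 i| <= M / h.
Proof.
move=> h_gt0 phi_le.
have h2_gt0 : 0 < (2 * h)^-1 by rewrite invr_gt0 mulr_gt0.
rewrite mxE normrM (gtr0_norm h2_gt0) (_ : M / h = 2 * M / (2 * h)).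
  rewrite ler_pM2r //.
  apply: le_trans (ler_normB _ _) _.
  by have := phi_le (x + h *: evec R i); have := phi_le (x - h *: evec R i); lra.
by field; rewrite gt_eqF.
Qed.

Lemma dotpBB u1 u2 x1 x2 :
  dotp (u1 - u2) (x1 - x2) = dotp u1 x1 - dotp u1 x2 - dotp u2 x1 + dotp u2 x2.
Proof.
by rewrite /dotp -!sumrB -big_split /=; apply: eq_bigr => i _; rewrite !mxE; ring.
Qed.

Lemma normr_dotp_le u x : `|dotp u x| <= \sum_i `|u 0 i| * `|x 0 i|.
Proof.
apply: le_trans (ler_norm_sum _ _ _) _.
by apply: ler_sum => i _; rewrite normrM.
Qed.

Lemma normr_coord_le_enorm u i : `|u 0 i| <= enorm u.
Proof.
rewrite /enorm -(sqrtr_sqr (u 0 i)) ler_sqrt; last by rewrite sumr_ge0 // => j _; exact: sqr_ge0.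
by rewrite (bigD1 i) //= lerDl sumr_ge0 // => j _; exact: sqr_ge0.
Qed.

Lemma enorm_sqr u : enorm u ^+ 2 = \sum_i u 0 i ^+ 2.
Proof. by rewrite sqr_sqrtr // sumr_ge0 // => i _; exact: sqr_ge0. Qed.

Lemma enorm_ge0 u : 0 <= enorm u.
Proof. exact: sqrtr_ge0. Qed.

Lemma enorm0 : enorm (0 : 'rV[R]_d) = 0.
Proof. by rewrite /enorm big1 ?sqrtr0 // => i _; rewrite mxE expr0n. Qed.

End DiscreteOperator.

Section LinearComparison.
Context {R : realType} {d : nat} {T N h : R}.
Hypotheses (h_gt0 : 0 < h) (N_ge0 : 0 <= N).
Implicit Types (u : R -> 'rV[R]_d -> R) (b : R -> 'rV[R]_d -> 'rV[R]_d)
  (g : R -> 'rV[R]_d -> R).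

Definition linear_solution u b g : Prop :=
  (exists M, forall t x, 0 <= t <= T -> `|u t x| <= M) /\
  (forall x, {within `[0, T], continuous (u^~ x)}) /\
  (forall t x, 0 < t < T -> derivable (u^~ x) t 1 /\
     'D_1 (u^~ x) t + Lh h N (u t) (b t x) x = - g t x).

Lemma solves_linear_solution q F u b g : solves T N h q F u ->
  (forall t x, 0 < t < T -> F t x (u t) = dotp (gradh h (u t) x) (b t x) + g t x) ->
  linear_solution u b g.
Proof.
move=> [u_bounded [u_cont [u_eq _]]] F_eq; split=> //; split=> // t x t_in.
have [u_der u_eq'] := u_eq t x t_in; split=> //.
by move: u_eq'; rewrite F_eq // /Lh; lra.
Qed.

Lemma linear_solutionN [u b g] : linear_solution u b g ->
  linear_solution (fun t x => - u t x) b (fun t x => - g t x).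
Proof.
move=> [[M u_le] [u_cont u_eq]]; split; [|split].
- by exists M => t x t_in; rewrite normrN u_le.
- by move=> x s; apply: continuousN; exact: u_cont.
- move=> t x t_in; have [u_der u_eq'] := u_eq t x t_in.
  split; first exact: derivableN.
  by rewrite deriveN // LhN -opprD u_eq'.
Qed.

Lemma linear_solutionB [u1 u2 b g1 g2] :
  linear_solution u1 b g1 -> linear_solution u2 b g2 ->
  linear_solution (fun t x => u1 t x - u2 t x) b (fun t x => g1 t x - g2 t x).
Proof.
move=> [[M1 u1_le] [u1_cont u1_eq]] [[M2 u2_le] [u2_cont u2_eq]]; split; [|split].
- exists (M1 + M2) => t x t_in; apply: le_trans (ler_normB _ _) _.
  by rewrite lerD ?u1_le ?u2_le.
- by move=> x s; apply: continuousB; [exact: u1_cont | exact: u2_cont].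
- move=> t x t_in; have [u1_der u1_eq'] := u1_eq t x t_in.
  have [u2_der u2_eq'] := u2_eq t x t_in.
  split; first exact: derivableB.
  rewrite (_ : (fun s => u1 s x - u2 s x) = u1^~ x - u2^~ x) // deriveB // LhB.
  by move: u1_eq' u2_eq'; lra.
Qed.

(* The barrier [psi s = be * exp (ga (T - s))] satisfies [d_t psi = - ga psi],
   so [u - psi] meets the hypotheses of [backward_max_principle] with
   [lam = d * 2N/h] given by [Lh_le]. *)
Lemma comparison_le [u b g be ga] : 0 <= ga -> 0 <= be ->
  linear_solution u b g -> (forall t x i, 0 < t < T -> `|b t x 0 i| <= 2 * N) ->
  (forall t x, 0 < t < T -> `|g t x| <= ga * (be * expR (ga * (T - t)))) ->
  (forall x, u T x <= be) ->
  forall t x, 0 <= t <= T -> u t x <= be * expR (ga * (T - t)).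
Proof.
move=> ga_ge0 be_ge0 [[M u_le] [u_cont u_eq]] b_le g_le uT_le t x t_in.
pose psi s := be * expR (ga * (T - s)).
have psi_derive (s : R) : is_derive s 1 psi (- (ga * psi s)).
  by apply: trigger_derive; rewrite /GRing.scale /psi /=; ring.
have psi_le s : 0 < s < T -> 0 <= psi s <= be * expR (ga * T).
  case/andP=> s_gt0 _; rewrite mulr_ge0 ?expR_ge0 //= ler_wpM2l // ler_expR.
  by rewrite ler_wpM2l // lerBlDr lerDl ltW.
have lam_ge0 : 0 <= d%:R * (2 * N / h).
  by rewrite mulr_ge0 // divr_ge0 ?(ltW h_gt0) // mulr_ge0.
set lam := d%:R * (2 * N / h) in lam_ge0 *.
have M_ge0 : 0 <= M by apply: le_trans (u_le t x t_in).
have g_psi r y : 0 < r < T -> `|g r y| <= ga * psi r := g_le r y.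
pose z s y := u s y - psi s.
have z_eq r y : 0 < r < T ->
    derivable (z^~ y) r 1 /\ 'D_1 (z^~ y) r = - g r y - Lh h N (u r) (b r y) y + ga * psi r.
  move=> r_in; have [u_der u_eq'] := u_eq r y r_in.
  have psi_der : derivable psi r 1 := @ex_derive _ _ _ _ _ _ _ (psi_derive r).
  split; first exact: derivableB.
  rewrite (_ : z^~ y = u^~ y - psi) // deriveB // (@derive_val _ _ _ _ _ _ _ (psi_derive r)).
  by rewrite -u_eq' addrK opprK.
suff : z t x <= 0 by rewrite /z /psi subr_le0.
apply: (@backward_max_principle R _ T lam (2 * (ga * (be * expR (ga * T)) + lam * M))) => //.
- by rewrite mulr_ge0 // addr_ge0 // mulr_ge0 // mulr_ge0 // expR_ge0.
- have psi_cont : {within `[0, T], continuous psi}.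
    apply: continuous_subspaceT => s; apply: differentiable_continuous.
    exact/derivable1_diffP/(@ex_derive _ _ _ _ _ _ _ (psi_derive s)).
  by move=> y s; apply: continuousB; [exact: u_cont | exact: psi_cont].
- by move=> r y r_in; case: (z_eq r y r_in).
- move=> r y r_in; have [_ ->] := z_eq r y r_in.
  have u_r_le y' : `|u r y'| <= M by apply: u_le; case/andP: r_in => r0 rT; rewrite !ltW.
  have := Lh_norm_le y h_gt0 N_ge0 (fun i => b_le r y i r_in) u_r_le; rewrite -/lam.
  have := g_psi r y r_in; have /andP[psi_ge0 psi_le'] := psi_le r r_in.
  have : ga * psi r <= ga * (be * expR (ga * T)) by apply: ler_wpM2l.
  rewrite !ler_norml => ? /andP[? ?] /andP[? ?].
  by apply/andP; split; lra.
- move=> r y m r_in z_le_m; have [_ ->] := z_eq r y r_in.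
  have u_le_m y' : u r y' <= m + psi r by have := z_le_m y'; rewrite /z; lra.
  have := Lh_le y h_gt0 (fun i => b_le r y i r_in) u_le_m; rewrite -/lam.
  have := g_psi r y r_in; rewrite ler_norml => /andP[_ g_up].
  by rewrite /z; lra.
- by move=> y; rewrite /z /psi subrr mulr0 expR0 mulr1 subr_le0.
Qed.

Lemma comparison_norm [u b g be ga] : 0 <= ga -> 0 <= be ->
  linear_solution u b g -> (forall t x i, 0 < t < T -> `|b t x 0 i| <= 2 * N) ->
  (forall t x, 0 < t < T -> `|g t x| <= ga * (be * expR (ga * (T - t)))) ->
  (forall x, `|u T x| <= be) ->
  forall t x, 0 <= t <= T -> `|u t x| <= be * expR (ga * (T - t)).
Proof.
move=> ga_ge0 be_ge0 u_sol b_le g_le uT_le t x t_in.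
rewrite ler_norml -lerNl; apply/andP; split.
  apply: (comparison_le ga_ge0 be_ge0 (linear_solutionN u_sol)) => // [s y s_in|y].
    by rewrite normrN g_le.
  by rewrite (le_trans (ler_norm _)) // normrN.
apply: (comparison_le ga_ge0 be_ge0 u_sol) => // y.
exact: le_trans (ler_norm _) (uT_le y).
Qed.

Lemma linear_solution_norm_le [u b g K] : 0 <= K ->
  linear_solution u b g -> (forall t x i, 0 < t < T -> `|b t x 0 i| <= 2 * N) ->
  (forall t x, 0 < t < T -> `|g t x| <= K) -> (forall x, `|u T x| <= K) ->
  forall t x, 0 <= t <= T -> `|u t x| <= K * expR (T - t).
Proof.
move=> K_ge0 u_sol b_le g_le uT_le t x t_in; rewrite -[T - t]mul1r.
apply: (comparison_norm ler01 K_ge0 u_sol) => // s y s_in.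
apply: le_trans (g_le s y s_in) _.
rewrite mul1r ler_peMr // -[leLHS]expR0 ler_expR mul1r subr_ge0.
by case/andP: s_in => _ /ltW.
Qed.

End LinearComparison.
Arguments linear_solution {R d} T N h u b g.

Section CubeIntegral.
Context {R : realType}.
Local Notation mu := (@lebesgue_measure R).

(* No measurability is needed: a nonnegative integral is the supremum of the
   integrals of the simple functions below the integrand. *)
Lemma ge0_le_integralT [f g : R -> \bar R] :
  (forall x, (0 <= f x)%E) -> (forall x, (f x <= g x)%E) ->
  (\int[mu]_x f x <= \int[mu]_x g x)%E.
Proof.
move=> f_ge0 fg; have g_ge0 x : (0 <= g x)%E := le_trans (f_ge0 x) (fg x).
rewrite !ge0_integralTE //; apply: ereal_sup_le => _ [s s_le <-].
by exists s => //= x; exact: le_trans (s_le x) (fg x).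
Qed.

Lemma integral_cst_centered_interval (c r : R) : 0 <= c -> 0 <= r ->
  (\int[mu]_a (if `|a| <= r then c else 0)%:E = (c * (2 * r))%:E)%E.
Proof.
move=> c_ge0 r_ge0.
transitivity (\int[mu]_(a in [set` `[(- r)%R, r%R]]) (cst c%:E) a)%E.
  rewrite [RHS]integral_mkcond; apply: eq_integral => a _ /=.
  rewrite /patch /= ler_norml; case: ifPn => a_in.
    by rewrite mem_set //= in_itv.
  by rewrite memNset //= in_itv; exact/negP.
rewrite integral_cst //=.
have := lebesgue_measure_itv `[(- r)%R, r%R]; rewrite /= => ->.
case: ifPn => [_|]; first by rewrite -EFinD -EFinM opprK; congr (_%:E); ring.
rewrite lte_fin ltNge negbK => r_le0.
have -> : r = 0 by lra.
by rewrite mule0 !mulr0.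
Qed.

Lemma iint_ge0 [k] [G : ('I_k -> R) -> \bar R] :
  (forall y, (0 <= G y)%E) -> (0 <= iint G)%E.
Proof.
elim: k G => [|k IH] G G_ge0 /=; first exact: G_ge0.
by apply: integral_ge0 => a _; apply: IH.
Qed.

Lemma iint_le_cube k (G : ('I_k -> R) -> \bar R) (Q r : R) : 0 <= Q -> 0 <= r ->
  (forall y, (0 <= G y)%E) ->
  (forall y, (G y <= (if [forall i, `|y i| <= r] then Q else 0)%:E)%E) ->
  (iint G <= (Q * (2 * r) ^+ k)%:E)%E.
Proof.
elim: k G Q => [|k IH] G Q Q_ge0 r_ge0 G_ge0 G_le /=.
  by apply: le_trans (G_le _) _; rewrite expr0 mulr1; case: ifP.
have slice_le a : (iint (fun y => G (fcons a y)) <=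
    (if `|a| <= r then Q * (2 * r) ^+ k else 0)%:E)%E.
  case: ifPn => a_le.
    apply: IH => // y; apply: le_trans (G_le _) _.
    case: ifPn => [/forallP ay_in|_]; last by case: ifP; rewrite lee_fin.
    rewrite ifT //; apply/forallP => j.
    by have := ay_in (lift ord0 j); rewrite /fcons liftK.
  rewrite -(mul0r ((2 * r) ^+ k)); apply: IH => // y; apply: le_trans (G_le _) _.
  rewrite if_same; case: ifPn => // /forallP y_in.
  by move: a_le; have := y_in ord0; rewrite /fcons unlift_none => ->.
apply: le_trans (ge0_le_integralT (fun a => iint_ge0 (fun y => G_ge0 _)) slice_le) _.
rewrite integral_cst_centered_interval ?mulr_ge0 ?exprn_ge0 //; last by lra.
by rewrite lee_fin exprSr !mulrA.
Qed.

Lemma integral_Rd_ball_le [k] [g : 'rV[R]_k -> R] [Q r : R] : 0 <= Q -> 0 <= r ->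
  (forall x, 0 <= g x) -> (forall x, enorm x <= r -> g x <= Q) ->
  (integral_Rd (fun x => if (enorm x <= r)%R then (g x)%:E else 0%E)
     <= (Q * (2 * r) ^+ k)%:E)%E.
Proof.
move=> Q_ge0 r_ge0 g_ge0 g_le; apply: iint_le_cube => // [y|y].
  by case: ifP; rewrite lee_fin.
case: ifPn => [y_in|_]; last by case: ifP; rewrite lee_fin.
rewrite ifT ?lee_fin ?g_le //; apply/forallP => i.
by apply: le_trans y_in; have := normr_coord_le_enorm (\row_j y j) i; rewrite mxE.
Qed.

End CubeIntegral.

Section PolicyIteration.
Context {R : realType} {d m : nat} {T N K h : R} {A : set 'rV[R]_m}
  {c : R -> 'rV[R]_d -> 'rV[R]_m -> R} {f : R -> 'rV[R]_d -> 'rV[R]_m -> 'rV[R]_d}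
  {q : 'rV[R]_d -> R} {alpha : R -> 'rV[R]_d -> 'rV[R]_d -> 'rV[R]_m}
  {alpha0 : R -> 'rV[R]_d -> 'rV[R]_m}
  {v : nat -> R -> 'rV[R]_d -> R} {w : R -> 'rV[R]_d -> R}.
Hypotheses (h_gt0 : 0 < h) (N_ge0 : 0 <= N) (K_ge0 : 0 <= K).
Hypothesis c_le : forall t x a, 0 <= t <= T -> A a -> `|c t x a| <= K.
Hypothesis f_le : forall t x a, 0 <= t <= T -> A a -> enorm (f t x a) <= 2 * N.
Hypothesis q_le : forall x, `|q x| <= K.
Hypothesis alpha_argmin : forall t x p, 0 <= t <= T ->
  A (alpha t x p) /\
  (forall a, A a -> a <> alpha t x p ->
     c t x (alpha t x p) + dotp p (f t x (alpha t x p)) < c t x a + dotp p (f t x a)).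
Hypothesis alpha_lip : forall t s x y p p', 0 <= t <= T -> 0 <= s <= T ->
  enorm (alpha t x p - alpha s y p') <= K * (`|t - s| + enorm (x - y) + enorm (p - p')).
Hypothesis alpha0_in : forall t x, A (alpha0 t x).
Hypothesis v_solves : forall n, solves T N h q
  (fun t x phi => c t x (policy alpha0 alpha h v n t x)
                  + dotp (gradh h phi x) (f t x (policy alpha0 alpha h v n t x))) (v n).
Hypothesis w_solves :
  solves T N h q (fun t x phi => Ham c f alpha t x (gradh h phi x)) w.

Let drift n t x := f t x (policy alpha0 alpha h v n t x).

Let itv_oo_cc [t] : 0 < t < T -> 0 <= t <= T.
Proof. by case/andP=> t_gt0 tT; rewrite !ltW. Qed.

Let f_coord_le [t] x a i : 0 <= t <= T -> A a -> `|f t x a 0 i| <= 2 * N.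
Proof. by move=> t_in /(f_le t x a t_in); apply: le_trans (normr_coord_le_enorm _ i). Qed.

Let alpha_in [t] x p : 0 <= t <= T -> A (alpha t x p).
Proof. by move=> t_in; have [] := alpha_argmin t x p t_in. Qed.

Let alpha_min [t] x p a : 0 <= t <= T -> A a ->
  c t x (alpha t x p) + dotp p (f t x (alpha t x p)) <= c t x a + dotp p (f t x a).
Proof.
move=> t_in Aa; have [_ alpha_lt] := alpha_argmin t x p t_in.
by have [->|/eqP/(alpha_lt a Aa)/ltW] := eqVneq a (alpha t x p).
Qed.

Let alpha_lipschitz [t] x p p' : 0 <= t <= T ->
  enorm (alpha t x p - alpha t x p') <= K * enorm (p - p').
Proof.
by move=> t_in; have := alpha_lip t t x x p p' t_in t_in; rewrite !subrr normr0 enorm0 !add0r.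
Qed.

Lemma policy_in n t x : 0 <= t <= T -> A (policy alpha0 alpha h v n t x).
Proof. by case: n => [|n] t_in /=; [exact: alpha0_in | exact: alpha_in]. Qed.

Let drift_le n t x i : 0 < t < T -> `|drift n t x 0 i| <= 2 * N.
Proof. by move/itv_oo_cc=> t_in; apply: f_coord_le => //; exact: policy_in. Qed.

Lemma evaluation_linear n : linear_solution T N h (v n) (drift n)
  (fun t x => c t x (policy alpha0 alpha h v n t x)).
Proof. by apply: solves_linear_solution (v_solves n) _ => t x _; rewrite addrC. Qed.

Lemma hjb_linear b : linear_solution T N h w b
  (fun t x => Ham c f alpha t x (gradh h (w t) x) - dotp (gradh h (w t) x) (b t x)).
Proof. by apply: solves_linear_solution w_solves _ => t x _; rewrite addrC subrK. Qed.

Lemma evaluation_norm_le n t x : 0 <= t <= T -> `|v n t x| <= K * expR (T - t).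
Proof.
move=> t_in.
apply: (linear_solution_norm_le h_gt0 N_ge0 K_ge0 (evaluation_linear n) _ _ _ t x t_in).
- by move=> s y i; apply: drift_le.
- by move=> s y /itv_oo_cc s_in; apply: c_le => //; exact: policy_in.
- by move=> y; have [_ [_ [_ ->]]] := v_solves n.
Qed.

Lemma hjb_norm_le t x : 0 <= t <= T -> `|w t x| <= K * expR (T - t).
Proof.
pose b s y := f s y (alpha s y (gradh h (w s) y)).
move=> t_in.
apply: (linear_solution_norm_le h_gt0 N_ge0 K_ge0 (hjb_linear b) _ _ _ t x t_in).
- by move=> s y i /itv_oo_cc s_in; apply: f_coord_le => //; exact: alpha_in.
- by move=> s y /itv_oo_cc s_in; rewrite /Ham addrK; apply: c_le => //; exact: alpha_in.
- by move=> y; have [_ [_ [_ ->]]] := w_solves.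
Qed.

Lemma policy_cost_gap n t x M : 0 <= t <= T -> (forall y, `|v n t y - w t y| <= M) ->
  0 <= c t x (policy alpha0 alpha h v n.+1 t x)
       - (Ham c f alpha t x (gradh h (w t) x) - dotp (gradh h (w t) x) (drift n.+1 t x))
    <= 4 * d%:R * N / h * M.
Proof.
move=> t_in vw_le.
have dp_le i : `|(gradh h (v n t) x - gradh h (w t) x) 0 i| <= M / h.
  by rewrite -gradhB; apply: gradh_norm_le.
rewrite /drift /Ham /=.
move: (gradh h (v n t) x) (gradh h (w t) x) dp_le => pv pw dp_le.
have a_v := alpha_in x pv t_in; have a_w := alpha_in x pw t_in.
have min_v := alpha_min x pv _ t_in a_w; have min_w := alpha_min x pw _ t_in a_v.
have gap : dotp (pv - pw) (f t x (alpha t x pw) - f t x (alpha t x pv)) <= 4 * d%:R * N / h * M.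
  apply: le_trans (ler_norm _) _; apply: (le_trans (normr_dotp_le _ _)).
  have -> : 4 * d%:R * N / h * M = \sum_(i < d) (M / h * (4 * N)).
    by rewrite sumr_const card_ord -mulr_natl; field; rewrite gt_eqF.
  apply: ler_sum => i _; apply: ler_pM (normr_ge0 _) (normr_ge0 _) (dp_le i) _.
  rewrite !mxE; apply: le_trans (ler_normB _ _) _.
  by have := f_coord_le x _ i t_in a_w; have := f_coord_le x _ i t_in a_v; lra.
by rewrite dotpBB in gap; apply/andP; split; lra.
Qed.

Lemma policy_iteration_error n t x : 0 <= t <= T ->
  `|v n t x - w t x| <= 2 * K * expR T / 2 ^+ n * expR (8 * d%:R * N / h * (T - t)).
Proof.
have ga_ge0 : 0 <= 8 * d%:R * N / h by rewrite divr_ge0 ?(ltW h_gt0) // mulr_ge0.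
elim: n t x => [|n IH] t x t_in.
  have /andP[t_ge0 tT] := t_in.
  apply: le_trans (ler_normB _ _) _; rewrite expr0 divr1.
  apply: le_trans (_ : 2 * K * expR T * 1 <= _); last first.
    by rewrite ler_wpM2l ?mulr_ge0 ?expR_ge0 // -[leLHS]expR0 ler_expR mulr_ge0 ?subr_ge0.
  have : K * expR (T - t) <= K * expR T by rewrite ler_wpM2l // ler_expR lerBlDr lerDl.
  by have := evaluation_norm_le 0 t x t_in; have := hjb_norm_le t x t_in; lra.
have be_ge0 : 0 <= 2 * K * expR T / 2 ^+ n.+1.
  by rewrite divr_ge0 ?exprn_ge0 // mulr_ge0 ?expR_ge0 // mulr_ge0.
have u_sol := linear_solutionB (evaluation_linear n.+1) (hjb_linear (drift n.+1)).
apply: (comparison_norm h_gt0 N_ge0 ga_ge0 be_ge0 u_sol _ _ _ t x t_in).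
- by move=> s y i; apply: drift_le.
- move=> s y s_in; have s_in' := itv_oo_cc s_in.
  have /andP[gap_ge0 gap_le] := policy_cost_gap n s y _ s_in' (IH s ^~ s_in').
  rewrite ger0_norm //; apply: le_trans gap_le _; rewrite le_eqVlt; apply/orP; left.
  by apply/eqP; rewrite exprS; field; rewrite expf_neq0 ?gt_eqF.
- move=> y; have [_ [_ [_ ->]]] := v_solves n.+1; have [_ [_ [_ ->]]] := w_solves.
  by rewrite subrr normr0.
Qed.

Lemma policy_gap_sq_le n t x : 0 <= t <= T ->
  enorm (alpha t x (gradh h (v n t) x) - alpha t x (gradh h (w t) x)) ^+ 2
    <= d%:R * (K * (2 * K * expR T / 2 ^+ n * expR (8 * d%:R * N / h * T)) / h) ^+ 2.
Proof.
move=> t_in; set M := 2 * K * expR T / 2 ^+ n * expR (8 * d%:R * N / h * T).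
have M_ge0 : 0 <= M by rewrite !mulr_ge0 ?expR_ge0 ?invr_ge0 ?exprn_ge0.
have vw_le y : `|v n t y - w t y| <= M.
  apply: le_trans (policy_iteration_error n t y t_in) _.
  apply: ler_wpM2l; first by rewrite !mulr_ge0 ?expR_ge0 ?invr_ge0 ?exprn_ge0.
  rewrite ler_expR; apply: ler_wpM2l; first by rewrite divr_ge0 ?(ltW h_gt0) // mulr_ge0.
  by case/andP: t_in => t_ge0 _; rewrite lerBlDr lerDl.
have dp_sq_le : enorm (gradh h (v n t) x - gradh h (w t) x) ^+ 2 <= d%:R * (M / h) ^+ 2.
  have -> : d%:R * (M / h) ^+ 2 = \sum_(i < d) (M / h) ^+ 2.
    by rewrite sumr_const card_ord mulr_natl.
  rewrite enorm_sqr; apply: ler_sum => i _.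
  have := gradh_norm_le x i h_gt0 vw_le; rewrite gradhB ler_norml => /andP[lo hi].
  have := divr_ge0 M_ge0 (ltW h_gt0).
  by rewrite !expr2; nra.
have := alpha_lipschitz x (gradh h (v n t) x) (gradh h (w t) x) t_in.
rewrite -ler_sqr ?nnegrE ?enorm_ge0 ?mulr_ge0 ?enorm_ge0 // => /le_trans; apply.
by rewrite -mulrA !(exprMn _ K) [X in _ <= X]mulrCA; apply: ler_wpM2l; rewrite ?sqr_ge0.
Qed.

End PolicyIteration.

Section Rates.
Context {R : realType}.

Lemma exp_rate_le (d : nat) (N C T h : R) : 0 <= N -> 0 <= T -> 0 < h <= 1 ->
  4 + 16 * d%:R * N <= C ->
  (expR T * expR (8 * d%:R * N / h * T) / h) ^+ 2 <= expR (C * expR (C * T) / h).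
Proof.
move=> N_ge0 T_ge0 /andP[h_gt0 h_le1] C_ge.
have dN_ge0 : 0 <= d%:R * N by rewrite mulr_ge0.
have inv_h_le : h^-1 <= expR h^-1 by apply: le_trans (expR_ge1Dx _); lra.
apply: le_trans (_ : expR (T + 8 * d%:R * N / h * T + h^-1) ^+ 2 <= _).
  rewrite lerXn2r ?nnegrE ?expR_ge0 ?divr_ge0 ?mulr_ge0 ?expR_ge0 ?(ltW h_gt0) //.
  by rewrite !expRD ler_wpM2l ?mulr_ge0 ?expR_ge0.
rewrite -expRM_natr ler_expR ler_pdivlMr //.
have -> : (T + 8 * d%:R * N / h * T + h^-1) * 2 * h = 2 * T * h + 16 * (d%:R * N) * T + 2.
  by field; rewrite gt_eqF.
have : C * (1 + C * T) <= C * expR (C * T) by rewrite ler_wpM2l ?expR_ge1Dx //; lra.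
have : 2 * T * h <= 2 * T by rewrite ler_piMr // mulr_ge0.
have : (2 + 16 * (d%:R * N)) * T <= C * T by apply: ler_wpM2r => //; lra.
have : C * T <= C * T * C by rewrite ler_peMr ?mulr_ge0 //; lra.
lra.
Qed.

Lemma policy_error_rate_le (d n : nat) (N K C T h r : R) :
  0 <= N -> 0 <= K -> 0 <= T -> 0 < h <= 1 -> 0 <= r ->
  4 * K ^+ 4 * d%:R * 2 ^+ d <= C -> 4 + 16 * d%:R * N <= C ->
  d%:R * (K * (2 * K * expR T / 2 ^+ n * expR (8 * d%:R * N / h * T)) / h) ^+ 2
    * (2 * r) ^+ d
  <= C * 2 ^- n * expR (C * expR (C * T) / h) * r ^+ d.
Proof.
move=> N_ge0 K_ge0 T_ge0 h_in r_ge0 C_ge C_ge'.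
set P := expR T * expR (8 * d%:R * N / h * T) / h.
have -> : d%:R * (K * (2 * K * expR T / 2 ^+ n * expR (8 * d%:R * N / h * T)) / h) ^+ 2
    * (2 * r) ^+ d = 4 * K ^+ 4 * d%:R * 2 ^+ d * (2 ^- n) ^+ 2 * P ^+ 2 * r ^+ d.
  by rewrite /P (exprMn _ 2 r); ring.
have inv2n_ge0 : 0 <= 2 ^- n :> R by rewrite invr_ge0 exprn_ge0.
apply: ler_wpM2r; first exact: exprn_ge0.
apply: ler_pM; rewrite ?sqr_ge0 ?exp_rate_le //.
  by rewrite !mulr_ge0 ?exprn_ge0 // sqr_ge0.
apply: ler_pM; rewrite ?sqr_ge0 ?mulr_ge0 ?exprn_ge0 //.
by rewrite expr2 ler_piMr // invf_le1 ?exprn_gt0 // exprn_ege1 //; lra.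
Qed.

End Rates.

Theorem theorem3p3 (R : realType) (d : nat) (N K : R) :
  (0 < d)%N -> 1 <= N -> 0 <= K ->
  exists C : R, 0 < C /\
  forall (m : nat) (T : R) (A : set 'rV[R]_m)
    (c : R -> 'rV[R]_d -> 'rV[R]_m -> R)
    (f : R -> 'rV[R]_d -> 'rV[R]_m -> 'rV[R]_d)
    (q : 'rV[R]_d -> R)
    (alpha : R -> 'rV[R]_d -> 'rV[R]_d -> 'rV[R]_m)
    (alpha0 : R -> 'rV[R]_d -> 'rV[R]_m)
    (h : R) (v : nat -> R -> 'rV[R]_d -> R) (w : R -> 'rV[R]_d -> R),
  (0 < m)%N -> 1 <= T -> compact A -> 0 < h < 1 ->
  (* (A1): boundedness *)
  (forall t x a, 0 <= t <= T -> A a ->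
     `|c t x a| <= K /\ enorm (f t x a) <= K) ->
  (forall x, `|q x| <= K) ->
  (* (A1): Lipschitz continuity in all variables *)
  (forall t s x y a b, 0 <= t <= T -> 0 <= s <= T -> A a -> A b ->
     `|c t x a - c s y b| <= K * (`|t - s| + enorm (x - y) + enorm (a - b)) /\
     enorm (f t x a - f s y b) <= K * (`|t - s| + enorm (x - y) + enorm (a - b))) ->
  (forall x y, `|q x - q y| <= K * enorm (x - y)) ->
  (* N >= max {1, ||f||_oo / 2} *)
  (forall t x a, 0 <= t <= T -> A a -> enorm (f t x a) <= 2 * N) ->
  (* alpha(t,x,p) is the unique minimizer over A of c(t,x,a) + p.f(t,x,a) *)
  (forall t x p, 0 <= t <= T ->
     A (alpha t x p) /\
     (forall a, A a -> a <> alpha t x p ->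
        c t x (alpha t x p) + dotp p (f t x (alpha t x p)) <
        c t x a + dotp p (f t x a))) ->
  (* (A2): Lipschitz continuity of alpha and of the initial policy alpha0 *)
  (forall t s x y p p', 0 <= t <= T -> 0 <= s <= T ->
     enorm (alpha t x p - alpha s y p') <=
       K * (`|t - s| + enorm (x - y) + enorm (p - p'))) ->
  (forall t x, A (alpha0 t x)) ->
  (forall t s x y, enorm (alpha0 t x - alpha0 s y) <= K * (`|t - s| + enorm (x - y))) ->
  (* v n = v_n^h : policy evaluation with policy alpha_n *)
  (forall n, solves T N h q
     (fun t x phi => c t x (policy alpha0 alpha h v n t x)
                     + dotp (gradh h phi x) (f t x (policy alpha0 alpha h v n t x)))
     (v n)) ->
  (* w = v^h : the semi-discrete HJB equation *)
  solves T N h q (fun t x phi => Ham c f alpha t x (gradh h phi x)) w ->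
  forall (n : nat) (t Rr : R), 0 <= t <= T -> 1 <= Rr ->
  (integral_Rd (fun x : 'rV[R]_d =>
     if (enorm x <= Rr)%R then
       ((enorm (alpha t x (gradh h (v n t) x) - alpha t x (gradh h (w t) x))) ^+ 2)%:E
     else 0%E)
   <= (C * 2 ^- n * expR (C * expR (C * T) / h) * Rr ^+ d)%:E)%E.
Proof.
move=> _ N_ge1 K_ge0; have N_ge0 : 0 <= N by lra.
have dN_ge0 : 0 <= d%:R * N by rewrite mulr_ge0.
have C_ge0 : 0 <= 4 * K ^+ 4 * d%:R * 2 ^+ d by rewrite !mulr_ge0 ?exprn_ge0.
exists (4 * K ^+ 4 * d%:R * 2 ^+ d + 4 + 16 * d%:R * N); split; first lra.
move=> m T A c f q alpha alpha0 h v w _ T_ge1 _ /andP[h_gt0 h_lt1] cf_le q_le _ _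
  f_le alpha_argmin alpha_lip alpha0_in _ v_solves w_solves n t r t_in r_ge1.
have c_le s y a : 0 <= s <= T -> A a -> `|c s y a| <= K.
  by move=> s_in Aa; case: (cf_le s y a s_in Aa).
have gap_le := policy_gap_sq_le h_gt0 N_ge0 K_ge0 c_le f_le q_le alpha_argmin alpha_lip
  alpha0_in v_solves w_solves n t ^~ t_in.
apply: le_trans (integral_Rd_ball_le _ _ (fun x => sqr_ge0 _) (fun x _ => gap_le x)) _.
- by rewrite mulr_ge0 ?sqr_ge0.
- lra.
by rewrite lee_fin policy_error_rate_le ?h_gt0 ?(ltW h_lt1) //; lra.
Qed.
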